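(* Under direct parameterization $\pi_\theta(a|s)=\theta_{s,a}$, and assuming each $\sigma(P_{s,a},\cdot)$ is differentiable, for all $s\in\mathcal S$, $a\in\mathcal A$, $$\frac{\partial\,\mathbb E_{s_0\sim\rho}V^{\pi_\theta}(s_0)}{\partial\theta_{s,a}}=\frac{1}{1-\gamma}\,d^{\pi_\theta,\hat P^{\pi_\theta}}(s)\,Q^{\pi_\theta}(s,a).$$
   Context: $\mathcal S$ and $\mathcal A$ are finite sets; $\Delta(\mathcal X)$ denotes the probability simplex over a finite set $\mathcal X$. $P=\{P_{s,a}\}$ with $P_{s,a}\in\Delta(\mathcal S)$ is the nominal transition kernel, $r:\mathcal S\times\mathcal A\to[0,1]$, $\gamma\in[0,1)$, $\rho\in\Delta(\mathcal S)$. A stationary policy is a map $\pi:\mathcal S\to\Delta(\mathcal A)$. A function $\sigma:\mathbb R^{\mathcal S}\to\mathbb R$ is a convex risk measure if (i) $V'\le V$ pointwise implies $\sigma(V)\le\sigma(V')$; (ii) $\sigma(V+m)=\sigma(V)-m$ for every constant $m$; (iii) $\sigma$ is convex. For each $(s,a)$ a convex risk measure $\sigma(P_{s,a},\cdot)$ is given, with penalty $D(\hat\mu,P_{s,a}):=\sup_{V}\big(-\sigma(P_{s,a},V)-\mathbb E_{s'\sim\hat\mu}V(s')\big)$. For a policy $\pi$, $V^\pi$ is the unique solution of $V^\pi(s)=\sum_a\pi(a|s)(r(s,a)-\gamma\sigma(P_{s,a},V^\pi))$, $Q^\pi(s,a):=r(s,a)-\gamma\sigma(P_{s,a},V^\pi)$,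 $\hat P^\pi_{s,a}\in\arg\min_{\hat\mu\in\Delta(\mathcal S)}\big(D(\hat\mu,P_{s,a})+\mathbb E_{s'\sim\hat\mu}V^\pi(s')\big)$. For a policy $\pi$ and stationary kernel $K$, $d^{\pi,K}(s):=(1-\gamma)\sum_{t\ge0}\gamma^t\Pr(s_t=s)$ with $s_0\sim\rho$, $a_t\sim\pi(\cdot|s_t)$, $s_{t+1}\sim K_{s_t,a_t}$. The partial derivative is taken treating $V^{\pi_\theta}$ as a function of the vector $(\theta_{s,a})$ in a neighbourhood of its value. *)

(* MathComp + MathComp-Analysis, R : realType.
   States S = 'I_n, actions A = 'I_m; functions on S are row vectors 'rV[R]_n
   (V 0 s is V(s)); a policy / parameter theta is an n x m matrix. *)
From HB Require Import structures.
From mathcomp Require Import all_boot all_order all_algebra.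
From mathcomp Require Import all_classical all_reals all_analysis.
Set Implicit Arguments. Unset Strict Implicit. Unset Printing Implicit Defensive.
Import Order.TTheory GRing.Theory Num.Theory.
Import numFieldNormedType.Exports.
Local Open Scope ring_scope.

Section Defs.
Variables (R : realType) (n m : nat).

Definition is_distr (mu : 'rV[R]_n) : Prop :=
  (forall i, 0 <= mu 0 i) /\ \sum_i mu 0 i = 1.

Definition expect (mu V : 'rV[R]_n) : R := \sum_i mu 0 i * V 0 i.

Definition convex_risk_measure (sig : 'rV[R]_n -> R) : Prop :=
  [/\ (forall V V' : 'rV[R]_n, (forall i, V' 0 i <= V 0 i) -> sig V <= sig V'),
      (forall (V : 'rV[R]_n) (c : R), sig (V + const_mx c) = sig V - c) &
      (forall (V V' : 'rV[R]_n) (l : R), 0 <= l <= 1 ->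
          sig (l *: V + (1 - l) *: V') <= l * sig V + (1 - l) * sig V')].

Definition penalty (sig : 'rV[R]_n -> R) (mu : 'rV[R]_n) : \bar R :=
  ereal_sup (range (fun V : 'rV[R]_n => (- sig V - expect mu V)%:E)).

Definition is_worst_case (sig : 'rV[R]_n -> R) (V mu : 'rV[R]_n) : Prop :=
  is_distr mu /\
  forall mu' : 'rV[R]_n, is_distr mu' ->
    (penalty sig mu + (expect mu V)%:E <= penalty sig mu' + (expect mu' V)%:E)%E.

Definition robust_bellman (r : 'I_n -> 'I_m -> R) (gamma : R)
    (sigma : 'I_n -> 'I_m -> 'rV[R]_n -> R) (theta : 'M[R]_(n, m))
    (V : 'rV[R]_n) : Prop :=
  forall s, V 0 s = \sum_a theta s a * (r s a - gamma * sigma s a V).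

(* V^{pi_theta}: the unique solution of the robust Bellman equation
   (default 0 if there is no unique solution). *)
Definition robust_value r gamma sigma (theta : 'M[R]_(n, m)) : 'rV[R]_n :=
  xget 0 [set V | robust_bellman r gamma sigma theta V /\
                  forall W, robust_bellman r gamma sigma theta W -> W = V].

Definition robust_Q r gamma sigma (theta : 'M[R]_(n, m)) (s : 'I_n) (a : 'I_m) : R :=
  r s a - gamma * sigma s a (robust_value r gamma sigma theta).

Definition robust_objective r gamma sigma (rho : 'rV[R]_n) (theta : 'M[R]_(n, m)) : R :=
  expect rho (robust_value r gamma sigma theta).

(* one step of the state chain: s_t ~ mu, a_t ~ pi(.|s_t), s_{t+1} ~ K_{s_t,a_t} *)
Definition chain_step (pi : 'M[R]_(n, m)) (K : 'I_n -> 'I_m -> 'rV[R]_n)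
    (mu : 'rV[R]_n) : 'rV[R]_n :=
  \row_j \sum_i \sum_a mu 0 i * pi i a * K i a 0 j.

Definition state_law pi K (rho : 'rV[R]_n) (t : nat) : 'rV[R]_n :=
  iter t (chain_step pi K) rho.

Definition visitation (gamma : R) pi K rho (s : 'I_n) : R :=
  (1 - gamma) * limn (fun N => \sum_(0 <= t < N) gamma ^+ t * state_law pi K rho t 0 s).

End Defs.

From HB Require Import structures.
From mathcomp Require Import all_boot all_order all_algebra.
From mathcomp Require Import all_classical all_reals all_analysis.
From mathcomp Require Import lra ring.
Import Order.TTheory GRing.Theory Num.Theory.
Import numFieldNormedType.Exports.
Local Open Scope classical_set_scope.
Local Open Scope ring_scope.
Set Implicit Arguments. Unset Strict Implicit. Unset Printing Implicit Defensive.

(* Perturbing the (s, a) entry of theta by t keeps the robust Bellman operator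
   a gamma (1 + |t|)-contraction, so V_t := V^{theta + t e_sa} is Lipschitz in t.
   A differentiable convex risk measure sigma(P_sa, .) has gradient -Phat_sa at
   V^theta: minus its gradient is a distribution whose penalty is attained at
   V^theta, and optimality of Phat_sa then forces E_{Phat_sa} to equal minus the
   derivative.  Linearising sigma at V^theta, the increment D = V_t - V^theta
   solves D = gamma P D + t Q(s, a) e_s + o(t), with P the state kernel of theta
   under Phat.  Pairing with the discounted occupancy u = rho + gamma u P gives
   E_rho D = t u(s) Q(s, a) + o(t), and u(s) = d^{theta, Phat}(s) / (1 - gamma). *)

Section row_vector_norm.
Variables (R : realType) (n : nat).
Implicit Types (V : 'rV[R]_n) (c : R).

Lemma rV_norm_entry V i : `|V 0 i| <= `|V|.
Proof.
have -> : `|V| = mx_norm V by [].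
rewrite mx_normrE.
exact: (le_bigmax _ (fun ij : 'I_1 * 'I_n => `|V ij.1 ij.2|) (0, i)).
Qed.

Lemma rV_norm_le V c : 0 <= c -> (forall i, `|V 0 i| <= c) -> `|V| <= c.
Proof.
move=> c0 Vc; have -> : `|V| = mx_norm V by [].
by rewrite mx_normrE; apply: bigmax_le => // -[i j] _ /=; rewrite (ord1 i).
Qed.

End row_vector_norm.

Section weighted_sums.
Variables (R : realType) (I : finType).
Implicit Types (w y : I -> R) (B : R).

Lemma convex_comb_norm_le w y B : (forall i, 0 <= w i) -> \sum_i w i = 1 ->
  (forall i, `|y i| <= B) -> `|\sum_i w i * y i| <= B.
Proof.
move=> w0 w1 yB; apply: le_trans (ler_norm_sum _ _ _) _.
apply: (@le_trans _ _ (\sum_i w i * B)); last by rewrite -mulr_suml w1 mul1r.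
by apply: ler_sum => i _; rewrite normrM ger0_norm // ler_wpM2l.
Qed.

Lemma weighted_sum_norm_le w y B : 0 <= B -> (forall i, `|y i| <= B) ->
  `|\sum_i w i * y i| <= (\sum_i `|w i|) * B.
Proof.
move=> B0 yB; apply: le_trans (ler_norm_sum _ _ _) _.
by rewrite mulr_suml; apply: ler_sum => i _; rewrite normrM ler_wpM2l.
Qed.

End weighted_sums.

(* ['rV[R]_n] is both normed and complete, but carries no joint
   [completeNormedModType] instance, which [banach_fixed_point] requires. *)
Definition complete_rV (R : realType) n := 'rV[R]_n.
HB.instance Definition _ (R : realType) n := NormedModule.copy (complete_rV R n) 'rV[R]_n.
HB.instance Definition _ (R : realType) n := Complete.copy (complete_rV R n) 'rV[R]_n.

Lemma contraction_unique_fixpoint (R : realType) n (F : 'rV[R]_n -> 'rV[R]_n) (q : R) :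
  0 <= q -> q < 1 -> (forall V W, `|F V - F W| <= q * `|V - W|) ->
  exists V, V = F V /\ forall W, W = F W -> W = V.
Proof.
move=> q0 q1 HF.
pose G : {fun [set: complete_rV R n] >-> [set: complete_rV R n]} := totalfun_ setT F.
have ctr : is_contraction G by exists (NngNum q0); split => //= -[x y] _; exact: HF.
have [V _ HV] := banach_fixed_point ctr (@closedT _) (ex_intro _ 0 I).
by exists V; split => // W HW; exact: (contraction_fixpoint_unique ctr I I HW HV).
Qed.

Section expectation.
Variables (R : realType) (n : nat).
Implicit Types (mu V W : 'rV[R]_n) (c : R).

Lemma expectD mu V W : expect mu (V + W) = expect mu V + expect mu W.
Proof. by rewrite /expect -big_split; apply: eq_bigr => i _; rewrite mxE mulrDr. Qed.

Lemma expectZ mu V c : expect mu (c *: V) = c * expect mu V.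
Proof. by rewrite /expect mulr_sumr; apply: eq_bigr => i _; rewrite mxE; ring. Qed.

Lemma expectN mu V : expect mu (- V) = - expect mu V.
Proof. by rewrite -scaleN1r expectZ mulN1r. Qed.

Lemma expectB mu V W : expect mu (V - W) = expect mu V - expect mu W.
Proof. by rewrite expectD expectN. Qed.

End expectation.

Section directional_derivative.
Variables (R : realType) (n : nat) (f : 'rV[R]_n -> R) (V : 'rV[R]_n).
Hypothesis df : differentiable f V.

Lemma diff_remainder_small e : 0 < e ->
  \forall k \near (0 : 'rV[R]_n), `|f (V + k) - f V - 'd f V k| <= e * `|k|.
Proof.
move=> e0; have /diff_locallyP [_ /eqaddoP /(_ e e0)] := df.
by apply: filterS => k /=; rewrite !fctE /= [k + V]addrC opprD addrA.
Qed.

Lemma diff_row_sum h : 'd f V h = \sum_j h 0 j * 'd f V (delta_mx 0 j).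
Proof.
by rewrite {1}(row_sum_delta h) linear_sum; apply: eq_bigr => j _; rewrite linearZ.
Qed.

Lemma diff_step_approx h e : 0 < e ->
  exists2 l : R, 0 < l <= 1 & `|f (V + l *: h) - f V - l * 'd f V h| <= l * e.
Proof.
move=> e0; have h1 : 0 < `|h| + 1 by rewrite ltr_wpDl.
have e'0 : 0 < e / (`|h| + 1) by rewrite divr_gt0.
have /nbhs_norm0P [d /= d0 Hd] := diff_remainder_small e'0.
pose l := Num.min 1 (d / (2 * (`|h| + 1))).
have l0 : 0 < l by rewrite lt_min ltr01 /= divr_gt0 // mulr_gt0.
have l1 : l <= 1 by rewrite ge_min lexx.
have ld : l * (`|h| + 1) <= d / 2.
  have : l <= d / (2 * (`|h| + 1)) by rewrite ge_min lexx orbT.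
  by rewrite ler_pdivlMr ?mulr_gt0 // ler_pdivlMr // -mulrA [(_ + 1) * 2]mulrC.
exists l; first by rewrite l0.
have nlh : `|l *: h| = l * `|h| by rewrite normrZ ger0_norm // ltW.
have hh : 0 <= `|h| := normr_ge0 h.
have := Hd (l *: h); rewrite nlh linearZ /=.
have lge0 := ltW l0.
move=> /(_ ltac:(nra)) /le_trans; apply.
have q1 : `|h| / (`|h| + 1) <= 1 by rewrite ler_pdivrMr // mul1r lerDl.
have q0 : 0 <= `|h| / (`|h| + 1) by rewrite divr_ge0 // ltW.
have -> : e / (`|h| + 1) * (l * `|h|) = l * e * (`|h| / (`|h| + 1)) by rewrite mulrA; ring.
by rewrite ler_piMr // mulr_ge0 // ltW.
Qed.

Lemma diff_le_of_step_le h c :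
  (forall l, 0 < l <= 1 -> f (V + l *: h) - f V <= l * c) -> 'd f V h <= c.
Proof.
move=> step; apply/ler_addgt0Pr => e e0.
have [l /andP[l0 l1] ] := diff_step_approx h e0; rewrite ler_norml => /andP[lo _].
have := step l; rewrite l0 l1 => /(_ isT) ?.
by rewrite -(ler_pM2l l0); nra.
Qed.

Lemma diff_ge_of_step_ge h c :
  (forall l, 0 < l <= 1 -> l * c <= f (V + l *: h) - f V) -> c <= 'd f V h.
Proof.
move=> step; rewrite -lerN2; apply/ler_addgt0Pr => e e0.
have [l /andP[l0 l1] ] := diff_step_approx h e0; rewrite ler_norml => /andP[_ up].
have := step l; rewrite l0 l1 => /(_ isT) ?.
by rewrite -(ler_pM2l l0); nra.
Qed.

End directional_derivative.

Lemma convex_risk_measure_lipschitz (R : realType) n (f : 'rV[R]_n -> R) V W :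
  convex_risk_measure f -> `|f V - f W| <= `|V - W|.
Proof.
case=> mono trans _; set c := `|V - W|.
have hc i : `|V 0 i - W 0 i| <= c by have := rV_norm_entry (V - W) i; rewrite !mxE => h; exact: h.
have shift (X Y : 'rV[R]_n) : (forall i, `|X 0 i - Y 0 i| <= c) -> f Y <= f X + c.
  move=> XY; rewrite -[c]opprK -trans; apply: mono => i; rewrite !mxE.
  by move: (XY i); rewrite ler_norml => /andP[? ?]; lra.
have h1 := shift V W hc.
have h2 : f V <= f W + c by apply: shift => i; rewrite distrC.
by rewrite ler_norml; apply/andP; split; lra.
Qed.

Section risk_measure_gradient.
Variables (R : realType) (n : nat) (f : 'rV[R]_n -> R) (V : 'rV[R]_n).
Hypotheses (crm : convex_risk_measure f) (df : differentiable f V).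

(* Minus the gradient of [f] at [V]: a distribution whose penalty is attained
   at [V], i.e. [D(g) = - f V - E_g V]. *)
Let g : 'rV[R]_n := \row_j - 'd f V (delta_mx 0 j).

Let expect_g h : expect g h = - 'd f V h.
Proof. by rewrite diff_row_sum /expect -sumrN; apply: eq_bigr => j _; rewrite mxE; ring. Qed.

Let g_distr : is_distr g.
Proof.
have [mono trans _] := crm.
split=> [j|].
  rewrite mxE oppr_ge0; apply: diff_le_of_step_le => // l /andP[l0 _].
  rewrite mulr0 subr_le0; apply: mono => i.
  by rewrite !mxE lerDl mulr_ge0 // ltW.
have -> : \sum_i g 0 i = expect g (const_mx 1).
  by apply: eq_bigr => i _; rewrite !mxE mulr1.
rewrite expect_g; apply/eqP; rewrite eqr_oppLR eq_le; apply/andP; split.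
  by apply: diff_le_of_step_le => // l _; rewrite scalemx_const mulr1 trans; lra.
by apply: diff_ge_of_step_ge => // l _; rewrite scalemx_const mulr1 trans; lra.
Qed.

Lemma convex_risk_measure_subgradient W : f V + 'd f V (W - V) <= f W.
Proof.
rewrite -lerBrDl; apply: diff_le_of_step_le => // l /andP[l0 l1].
have -> : V + l *: (W - V) = l *: W + (1 - l) *: V.
  by apply/rowP => i; rewrite !mxE; ring.
have [_ _ conv] := crm.
by have := conv W V l; rewrite (ltW l0) l1 => /(_ isT); lra.
Qed.

Let penalty_g : (penalty f g + (expect g V)%:E <= (- f V)%:E)%E.
Proof.
have : (penalty f g <= (- f V - expect g V)%:E)%E.
  apply: ge_ereal_sup => _ [W _ <-]; rewrite lee_fin !expect_g.
  by have := convex_risk_measure_subgradient W; rewrite linearB /=; lra.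
by move/(leeD2r (expect g V)%:E); rewrite -EFinD subrK.
Qed.

Lemma worst_case_diff mu : is_worst_case f V mu -> forall h, 'd f V h = - expect mu h.
Proof.
move=> [_ wc].
have opt W : - f W - expect mu W + expect mu V <= - f V.
  have mu_pen : ((- f W - expect mu W)%:E <= penalty f mu)%E.
    by apply: ereal_sup_ubound; exists W.
  have := le_trans (leeD2r (expect mu V)%:E mu_pen) (le_trans (wc g g_distr) penalty_g).
  by rewrite -EFinD lee_fin.
have low h : - expect mu h <= 'd f V h.
  apply: diff_ge_of_step_ge => // l _.
  by have := opt (V + l *: h); rewrite expectD expectZ; lra.
move=> h; apply/eqP; rewrite eq_le low andbT.
by have := low (- h); rewrite linearN expectN /=; lra.
Qed.

End risk_measure_gradient.

Section robust_bellman_operator.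
Variables (R : realType) (n m : nat) (r : 'I_n -> 'I_m -> R) (gamma : R).
Variables (sigma : 'I_n -> 'I_m -> 'rV[R]_n -> R) (th : 'M[R]_(n, m)).
Hypotheses (gamma_ge0 : 0 <= gamma) (crm : forall s a, convex_risk_measure (sigma s a)).

Definition bellman_op (V : 'rV[R]_n) : 'rV[R]_n :=
  \row_s \sum_a th s a * (r s a - gamma * sigma s a V).

Lemma robust_bellmanE V : robust_bellman r gamma sigma th V <-> V = bellman_op V.
Proof.
by split => [H|H s]; [apply/rowP => s; rewrite mxE H | rewrite {1}H mxE].
Qed.

Lemma bellman_op_lipschitz (k : R) V W : 0 <= k -> (forall s, \sum_a `|th s a| <= k) ->
  `|bellman_op V - bellman_op W| <= gamma * k * `|V - W|.
Proof.
move=> k0 thk; apply: rV_norm_le => [|s]; first by rewrite !mulr_ge0.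
rewrite !mxE -sumrB; apply: le_trans (ler_norm_sum _ _ _) _.
apply: (@le_trans _ _ (\sum_a `|th s a| * (gamma * `|V - W|))).
  apply: ler_sum => a _; rewrite -mulrBr normrM ler_wpM2l //.
  rewrite (_ : _ - _ = gamma * (sigma s a W - sigma s a V)); last by ring.
  by rewrite normrM ger0_norm // ler_wpM2l // distrC convex_risk_measure_lipschitz.
by rewrite -mulr_suml [gamma * k]mulrC -mulrA ler_wpM2r // mulr_ge0.
Qed.

Lemma robust_value_bellman (k : R) : 0 <= k -> gamma * k < 1 ->
  (forall s, \sum_a `|th s a| <= k) ->
  robust_bellman r gamma sigma th (robust_value r gamma sigma th).
Proof.
move=> k0 gk thk.
have [V [FV Vuniq]] := contraction_unique_fixpoint (mulr_ge0 gamma_ge0 k0) gk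
  (fun V W => bellman_op_lipschitz V W k0 thk).
suff : exists V, robust_bellman r gamma sigma th V /\
    forall W, robust_bellman r gamma sigma th W -> W = V by move/(xgetPex 0) => [].
by exists V; split=> [|W /robust_bellmanE /Vuniq]; first exact/robust_bellmanE.
Qed.

End robust_bellman_operator.

Definition policy_kernel (R : realType) n m (pi : 'M[R]_(n, m))
    (K : 'I_n -> 'I_m -> 'rV[R]_n) (i j : 'I_n) : R :=
  \sum_a pi i a * K i a 0 j.

Lemma policy_kernel_expect (R : realType) n m (pi : 'M[R]_(n, m)) K i (D : 'rV[R]_n) :
  \sum_j policy_kernel pi K i j * D 0 j = \sum_a pi i a * expect (K i a) D.
Proof.
under eq_bigr do rewrite mulr_suml.
rewrite exchange_big /=; apply: eq_bigr => a _.
by rewrite /expect mulr_sumr; apply: eq_bigr => j _; ring.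
Qed.

Lemma occupancy_pairing (R : realType) n (u rho D : 'rV[R]_n) (M : 'I_n -> 'I_n -> R) gamma :
  (forall j, u 0 j = rho 0 j + gamma * \sum_i u 0 i * M i j) ->
  expect rho D = \sum_i u 0 i * (D 0 i - gamma * \sum_j M i j * D 0 j).
Proof.
move=> Hu.
have -> : expect rho D = \sum_j u 0 j * D 0 j - \sum_j gamma * (\sum_i u 0 i * M i j) * D 0 j.
  by rewrite -sumrB; apply: eq_bigr => j _; rewrite Hu; ring.
rewrite [X in _ - X](eq_bigr (fun j => \sum_i gamma * (u 0 i * M i j * D 0 j))); last first.
  by move=> j _; rewrite mulr_sumr mulr_suml; apply: eq_bigr => i _; ring.
rewrite exchange_big /= -sumrB; apply: eq_bigr => i _.
by rewrite mulrBr !mulr_sumr; congr (_ - _); apply: eq_bigr => j _; ring.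
Qed.

Lemma geometric_sum_le (R : realType) (gamma : R) N : 0 <= gamma -> gamma < 1 ->
  \sum_(0 <= t < N) gamma ^+ t <= (1 - gamma)^-1.
Proof.
move=> g0 g1.
have geom : (1 - gamma) * \sum_(0 <= t < N) gamma ^+ t = 1 - gamma ^+ N.
  elim: N => [|N IH]; first by rewrite big_geq // mulr0 expr0 subrr.
  by rewrite big_nat_recr //= mulrDr IH exprS; ring.
rewrite -(ler_pM2l (_ : 0 < 1 - gamma)) ?subr_gt0 // geom mulfV ?subr_eq0 ?gt_eqF //.
by rewrite lerBlDr lerDl exprn_ge0.
Qed.

Section occupancy.
Variables (R : realType) (n m : nat) (pi : 'M[R]_(n, m)) (K : 'I_n -> 'I_m -> 'rV[R]_n).
Variables (rho : 'rV[R]_n) (gamma : R).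
Hypotheses (gamma_ge0 : 0 <= gamma) (gamma_lt1 : gamma < 1) (rho_distr : is_distr rho).
Hypotheses (pi_ge0 : forall s a, 0 <= pi s a) (pi_sum1 : forall s, \sum_a pi s a = 1).
Hypothesis K_distr : forall s a, is_distr (K s a).

Lemma state_lawS t j :
  state_law pi K rho t.+1 0 j = \sum_i state_law pi K rho t 0 i * policy_kernel pi K i j.
Proof.
rewrite /state_law iterS /chain_step mxE; apply: eq_bigr => i _.
by rewrite mulr_sumr; apply: eq_bigr => a _; rewrite !mulrA.
Qed.

Lemma state_law_distr t : is_distr (state_law pi K rho t).
Proof.
elim: t => [//|t [law_ge0 law_sum1]]; split => [j|].
  rewrite state_lawS; apply: sumr_ge0 => i _; apply: mulr_ge0 => //.
  by apply: sumr_ge0 => a _; apply: mulr_ge0 => //; case: (K_distr i a).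
under eq_bigr do rewrite state_lawS.
rewrite exchange_big /= -law_sum1; apply: eq_bigr => i _.
rewrite -mulr_sumr exchange_big /= (eq_bigr (fun a => pi i a)) ?pi_sum1 ?mulr1 // => a _.
by rewrite -mulr_sumr; case: (K_distr i a) => _ ->; rewrite mulr1.
Qed.

Let occ j N := \sum_(0 <= t < N) gamma ^+ t * state_law pi K rho t 0 j.

Lemma occupancy_cvg j : cvgn (occ j).
Proof.
have law_le1 t : state_law pi K rho t 0 j <= 1.
  have [law_ge0 <-] := state_law_distr t.
  by rewrite (bigD1 j) //= lerDl sumr_ge0.
apply/cvg_ex; eexists; apply: nondecreasing_cvgn.
  apply/nondecreasing_seqP => N; rewrite /occ big_nat_recr //= lerDl.
  by rewrite mulr_ge0 ?exprn_ge0 //; case: (state_law_distr N).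
exists (1 - gamma)^-1 => _ [N _ <-].
apply: le_trans (geometric_sum_le N gamma_ge0 gamma_lt1); apply: ler_sum => t _.
by rewrite ler_piMr ?exprn_ge0.
Qed.

Definition occupancy : 'rV[R]_n := \row_j limn (occ j).

Lemma visitationE j : visitation gamma pi K rho j = (1 - gamma) * occupancy 0 j.
Proof. by rewrite mxE. Qed.

Lemma occupancy_balance j :
  occupancy 0 j = rho 0 j + gamma * \sum_i occupancy 0 i * policy_kernel pi K i j.
Proof.
have occS N : occ j N.+1 = rho 0 j + gamma * \sum_i occ i N * policy_kernel pi K i j.
  rewrite /occ big_nat_recl //= expr0 mul1r; congr (_ + _).
  under eq_bigr do rewrite state_lawS.
  rewrite big_distrr /=.
  under [X in _ = X]eq_bigr do rewrite big_distrl big_distrr /=.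
  rewrite [X in _ = X]exchange_big /=; apply: eq_bigr => t _.
  by rewrite big_distrr; apply: eq_bigr => i _; rewrite exprS /= !mulrA.
have lim_shift : occ j N.+1 @[N --> \oo] --> limn (occ j).
  by rewrite cvg_shiftS; exact: occupancy_cvg.
have lim_rec : occ j N.+1 @[N --> \oo] -->
    rho 0 j + gamma * \sum_i limn (occ i) * policy_kernel pi K i j.
  under eq_cvg do rewrite occS.
  apply: cvgD; first exact: cvg_cst.
  apply: cvgM; first exact: cvg_cst.
  apply: cvg_big => [|i _]; first exact: add_continuous.
  by apply: cvgM; [exact: occupancy_cvg | exact: cvg_cst].
rewrite mxE (cvg_unique (@norm_hausdorff _ _) lim_shift lim_rec).
by under [in RHS]eq_bigr do rewrite mxE.
Qed.

End occupancy.

Lemma is_derive1_of_cvg (R : realType) (F : R -> R) x l :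
  (fun h => h^-1 * (F (h + x) - F x)) @ 0^' --> l -> is_derive x 1 F l.
Proof.
move=> Fl.
have quotE : (fun h => h^-1 *: ((F \o shift x) (h *: 1) - F x)) =
    (fun h => h^-1 * (F (h + x) - F x)) by apply/funext => h /=; rewrite [h *: 1]mulr1.
split; first by rewrite /derivable quotE; apply/cvg_ex; exists l.
by rewrite /derive quotE; apply: cvg_lim.
Qed.

Lemma perturbed_row_sum (R : realType) n m (theta : 'M[R]_(n, m)) s a t s' (X : 'I_m -> R) :
  \sum_a' (theta + t *: delta_mx s a) s' a' * X a' =
  \sum_a' theta s' a' * X a' + t * ((s' == s)%:R * X a).
Proof.
rewrite (bigD1 a) //= [X in _ = X + _](bigD1 a) //= !mxE eqxx andbT.
rewrite (eq_bigr (fun a' => theta s' a' * X a')) => [|a' /negbTE a'a]; first by ring.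
by rewrite !mxE a'a andbF mulr0 addr0.
Qed.


Section policy_perturbation.
Variables (R : realType) (n m : nat) (sg : 'I_n -> 'I_m -> 'rV[R]_n -> R).
Variables (r : 'I_n -> 'I_m -> R) (gamma : R) (theta : 'M[R]_(n, m)) (s : 'I_n) (a : 'I_m).
Hypotheses (gamma_ge0 : 0 <= gamma) (gamma_lt1 : gamma < 1).
Hypothesis crm : forall s a, convex_risk_measure (sg s a).
Hypotheses (theta_ge0 : forall s a, 0 <= theta s a) (theta_sum1 : forall s, \sum_a theta s a = 1).

Let V0 := robust_value r gamma sg theta.
Let Vt t := robust_value r gamma sg (theta + t *: delta_mx s a).
Let Q := robust_Q r gamma sg theta s a.
Let risk_gap t := sg s a V0 - sg s a (Vt t).
(* Radius on which the perturbed Bellman operator is still a contraction. *)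
Let d0 := (1 - gamma) / 2.
Let C := 2 * `|Q| / (1 - gamma).

Let d0_gt0 : 0 < d0. Proof. by rewrite divr_gt0 // subr_gt0. Qed.

Lemma perturbed_bellman t : `|t| <= d0 ->
  robust_bellman r gamma sg (theta + t *: delta_mx s a) (Vt t).
Proof.
move=> ht; have t0 := normr_ge0 t.
apply: (robust_value_bellman r gamma_ge0 crm (addr_ge0 ler01 t0)).
  have g1 : 0 < 1 - gamma by rewrite subr_gt0.
  by have := ler_wpM2l gamma_ge0 ht; rewrite /d0; nra.
move=> s'; under eq_bigr do rewrite !mxE.
apply: (@le_trans _ _ (\sum_a' (theta s' a' + `|t| * ((s' == s) && (a' == a))%:R))).
  apply: ler_sum => a' _; apply: le_trans (ler_normD _ _) _.
  by rewrite ger0_norm // normrM [`|_%:R|]ger0_norm.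
rewrite big_split /= theta_sum1 lerD2l -mulr_sumr ler_piMr //.
rewrite (bigD1 a) //= eqxx andbT big1 => [|a' /negbTE ->]; last by rewrite andbF.
by rewrite addr0; case: (s' == s).
Qed.

Let V0_bellman : robust_bellman r gamma sg theta V0.
Proof.
by have := @perturbed_bellman 0; rewrite normr0 /Vt scale0r addr0; apply; exact: ltW.
Qed.

Lemma perturbed_value_diff t s' : `|t| <= d0 ->
  (Vt t - V0) 0 s' = \sum_a' theta s' a' * (gamma * (sg s' a' V0 - sg s' a' (Vt t))) +
                     t * ((s' == s)%:R * (Q + gamma * risk_gap t)).
Proof.
move=> ht; rewrite !mxE (perturbed_bellman ht s') (V0_bellman s') perturbed_row_sum addrAC.
have -> : \sum_a' theta s' a' * (r s' a' - gamma * sg s' a' (Vt t)) -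
    \sum_a' theta s' a' * (r s' a' - gamma * sg s' a' V0) =
    \sum_a' theta s' a' * (gamma * (sg s' a' V0 - sg s' a' (Vt t))).
  by rewrite -sumrB; apply: eq_bigr => a' _; ring.
rewrite /Q /robust_Q /risk_gap -/V0.
by case: (s' =P s) => [->|_]; [ring | rewrite !mul0r; ring].
Qed.

Lemma risk_gap_le t : `|risk_gap t| <= `|Vt t - V0|.
Proof. by rewrite distrC convex_risk_measure_lipschitz. Qed.

Lemma perturbed_value_lipschitz t : `|t| <= d0 -> `|Vt t - V0| <= C * `|t|.
Proof.
move=> ht; set x := `|Vt t - V0|.
have x0 : 0 <= x := normr_ge0 _.
have t0 : 0 <= `|t| := normr_ge0 t.
have x_rec : x <= gamma * x + `|t| * (`|Q| + gamma * x).
  apply: rV_norm_le => [|s'].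
    by have := mulr_ge0 gamma_ge0 x0; have := normr_ge0 Q; nra.
  rewrite perturbed_value_diff //; apply: le_trans (ler_normD _ _) _; apply: lerD.
    apply: convex_comb_norm_le => // a'.
    by rewrite normrM ger0_norm // ler_wpM2l // distrC convex_risk_measure_lipschitz.
  rewrite normrM ler_wpM2l // normrM.
  apply: (@le_trans _ _ (1 * (`|Q| + gamma * x))); last by rewrite mul1r.
  apply: ler_pM => //; first by case: (s' == s); rewrite ?normr1 ?normr0.
  apply: le_trans (ler_normD _ _) _.
  by rewrite lerD2l normrM ger0_norm // ler_wpM2l // risk_gap_le.
rewrite /C mulrAC ler_pdivlMr ?subr_gt0 //; rewrite /d0 in ht.
have h1 : 0 <= (1 - gamma) * `|t| * x by rewrite !mulr_ge0 // subr_ge0 ltW.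
have h2 : 0 <= ((1 - gamma) / 2 - `|t|) * x by rewrite mulr_ge0 // subr_ge0.
nra.
Qed.

Lemma perturbed_value_cvg : Vt t - V0 @[t --> (0 : R)] --> (0 : 'rV[R]_n).
Proof.
apply/cvgr0Pnorm_le => e e0.
have C1 : 0 < C + 1 by rewrite ltr_wpDl // divr_ge0 ?mulr_ge0 // subr_ge0 ltW.
suff : \forall t \near (0 : R), `|Vt t - V0| <= e by apply.
near=> t.
have td : `|t| <= d0 by near: t; exact: (nbhs0_le (V := R)).
apply: le_trans (perturbed_value_lipschitz td) _.
have : `|t| <= e / (C + 1) by near: t; apply: (nbhs0_le (V := R)); rewrite divr_gt0.
rewrite ler_pdivlMr // => te; apply: le_trans te.
by rewrite mulrC ler_wpM2l // lerDl.
Unshelve. all: by end_near.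
Qed.

Lemma risk_gap_cvg : risk_gap t @[t --> 0] --> 0.
Proof.
apply/cvgr0Pnorm_le => e e0.
suff : \forall t \near (0 : R), `|risk_gap t| <= e by apply.
have D_small := cvgr0_norm_le _ perturbed_value_cvg _ e0.
near=> t; apply: le_trans (risk_gap_le t) _; near: t; exact: D_small.
Unshelve. all: by end_near.
Qed.

Variables (rho : 'rV[R]_n) (Phat : 'I_n -> 'I_m -> 'rV[R]_n).
Hypotheses (rho_distr : is_distr rho) (Phat_distr : forall s a, is_distr (Phat s a)).
Hypothesis sg_diff : forall s a, differentiable (sg s a) V0.
Hypothesis Phat_worst : forall s a, is_worst_case (sg s a) V0 (Phat s a).

Let u := occupancy theta Phat rho gamma.
(* Error of the first-order expansion [sigma(V0 + D) ~ sigma(V0) - E_Phat D]. *)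
Let lin_err i a' t := sg i a' (Vt t) - sg i a' V0 + expect (Phat i a') (Vt t - V0).
Let remainder t := \sum_i u 0 i * \sum_a' theta i a' * lin_err i a' t.

Let balance := occupancy_balance gamma_ge0 gamma_lt1 rho_distr theta_ge0 theta_sum1 Phat_distr.

Lemma state_increment t i : `|t| <= d0 ->
  (Vt t - V0) 0 i - gamma * \sum_j policy_kernel theta Phat i j * (Vt t - V0) 0 j =
  t * ((i == s)%:R * (Q + gamma * risk_gap t)) - gamma * \sum_a' theta i a' * lin_err i a' t.
Proof.
move=> ht; rewrite policy_kernel_expect perturbed_value_diff // addrAC.
have -> : \sum_a' theta i a' * (gamma * (sg i a' V0 - sg i a' (Vt t))) -
    gamma * \sum_a' theta i a' * expect (Phat i a') (Vt t - V0) =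
    - (gamma * \sum_a' theta i a' * lin_err i a' t).
  by rewrite !mulr_sumr -sumrB -sumrN; apply: eq_bigr => a' _; rewrite /lin_err; ring.
by rewrite addrC.
Qed.

Lemma objective_increment t : `|t| <= d0 ->
  expect rho (Vt t - V0) = t * (u 0 s * (Q + gamma * risk_gap t)) - gamma * remainder t.
Proof.
move=> ht; rewrite (occupancy_pairing _ balance).
under eq_bigr do rewrite state_increment // mulrBr.
rewrite sumrB /remainder mulr_sumr; congr (_ - _); last by apply: eq_bigr => i _; ring.
rewrite (bigD1 s) //= eqxx big1 ?addr0 => [|i /negbTE ->]; first by rewrite /u /=; ring.
by rewrite mul0r mulr0 mulr0.
Qed.

Lemma remainder_cvg : t^-1 * remainder t @[t --> 0^'] --> 0.
Proof.
pose U := \sum_i `|u 0 i|.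
have U0 : 0 <= U by apply: sumr_ge0.
have C0 : 0 <= C by rewrite divr_ge0 ?mulr_ge0 // subr_ge0 ltW.
apply/cvgr0Pnorm_le => e e0.
pose e1 := e / (U * C + 1).
have UC1 : 0 < U * C + 1 by rewrite ltr_wpDl // mulr_ge0.
have e10 : 0 < e1 by rewrite divr_gt0.
pose small_err p k :=
  `|sg p.1 p.2 (V0 + k) - sg p.1 p.2 V0 + expect (Phat p.1 p.2) k| <= e1 * `|k|.
have frechet : \forall k \near (0 : 'rV[R]_n), forall p : 'I_n * 'I_m, small_err p k.
  have small_errP p : \forall k \near (0 : 'rV[R]_n), small_err p k.
    case: p => i a'; have := diff_remainder_small (sg_diff i a') e10; apply: filterS => k.
    by rewrite /small_err (worst_case_diff (crm i a') (sg_diff i a') (Phat_worst i a')) opprK.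
  exact: (@filter_forall _ _ small_err _ _ small_errP).
have lin_err_small : \forall t \near 0^', forall i a', `|lin_err i a' t| <= e1 * `|Vt t - V0|.
  have D_small : \forall t \near (0 : R), forall p, small_err p (Vt t - V0) :=
    perturbed_value_cvg frechet.
  apply: (@nbhs_dnbhs _ 0); move: D_small; apply: filterS => t small i a'.
  by have := small (i, a'); rewrite /small_err /= [V0 + _]addrC subrK.
suff : \forall t \near (0 : R)^', `|t^-1 * remainder t| <= e by apply.
near=> t.
have ht : `|t| <= d0 by near: t; apply: (dnbhs0_le (V := R)).
have t0 : 0 < `|t| by rewrite normr_gt0; near: t; exact: nbhs_dnbhs_neq.
have D_le := perturbed_value_lipschitz ht.
have lin_le : forall i a', `|lin_err i a' t| <= e1 * `|Vt t - V0|.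
  by near: t; exact: lin_err_small.
have rem_le : `|remainder t| <= U * (e1 * (C * `|t|)).
  apply: weighted_sum_norm_le => [|i]; first exact: mulr_ge0 (ltW e10) (mulr_ge0 C0 (normr_ge0 t)).
  apply: convex_comb_norm_le => // a'.
  exact: le_trans (lin_le i a') (ler_wpM2l (ltW e10) D_le).
rewrite normrM normfV ler_pdivrMl // mulrC.
apply: le_trans rem_le _.
have -> : U * (e1 * (C * `|t|)) = (U * C * e1) * `|t| by ring.
rewrite ler_wpM2r ?normr_ge0 // /e1 mulrA ler_pdivrMr // mulrC.
by rewrite ler_wpM2l ?lerDl // ltW.
Unshelve. all: by end_near.
Qed.

Lemma perturbed_objective_derive :
  is_derive (0 : R) 1 (fun t => expect rho (Vt t)) (u 0 s * Q).
Proof.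
apply: is_derive1_of_cvg.
have Vt0 : Vt 0 = V0 by rewrite /Vt scale0r addr0.
have expansion : \forall t \near 0^',
    u 0 s * Q + gamma * (u 0 s * risk_gap t) - gamma * (t^-1 * remainder t) =
    t^-1 * (expect rho (Vt (t + 0)) - expect rho (Vt 0)).
  near=> t.
  have tn0 : t != 0 by near: t; exact: nbhs_dnbhs_neq.
  rewrite addr0 Vt0 -expectB objective_increment; last by near: t; apply: (dnbhs0_le (V := R)).
  by field.
have gap_cvg : risk_gap t @[t --> (0 : R)^'] --> 0.
  exact: cvg_trans (cvg_app _ (@nbhs_dnbhs _ 0)) risk_gap_cvg.
apply: cvg_trans (near_eq_cvg expansion) _.
rewrite -[X in _ `=>` nbhs X](_ : u 0 s * Q + gamma * (u 0 s * 0) - gamma * 0 = _); last by ring.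
apply: cvgB; last by apply: cvgM; [exact: cvg_cst | exact: remainder_cvg].
apply: cvgD; first exact: cvg_cst.
by apply: cvgM; [exact: cvg_cst | apply: cvgM; [exact: cvg_cst | exact: gap_cvg]].
Unshelve. all: by end_near.
Qed.

End policy_perturbation.

Theorem mainTheorem7 (R : realType) (n m : nat)
    (P : 'I_n -> 'I_m -> 'rV[R]_n)
    (sig : 'rV[R]_n -> 'rV[R]_n -> R)
    (r : 'I_n -> 'I_m -> R) (gamma : R) (rho : 'rV[R]_n)
    (theta : 'M[R]_(n, m))
    (Phat : 'I_n -> 'I_m -> 'rV[R]_n) :
  (forall s a, is_distr (P s a)) ->
  (forall s a, 0 <= r s a <= 1) ->
  0 <= gamma < 1 ->
  is_distr rho ->
  (forall s a, convex_risk_measure (sig (P s a))) ->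
  (forall s a (V : 'rV[R]_n), differentiable (sig (P s a)) V) ->
  (forall s a, 0 <= theta s a) -> (forall s, \sum_a theta s a = 1) ->
  (forall s a, is_worst_case (sig (P s a))
       (robust_value r gamma (fun s a => sig (P s a)) theta) (Phat s a)) ->
  forall (s : 'I_n) (a : 'I_m),
    is_derive (0 : R) (1 : R)
      (fun t : R => robust_objective r gamma (fun s a => sig (P s a)) rho
                      (theta + t *: delta_mx s a))
      ((1 - gamma)^-1 * visitation gamma theta Phat rho s
         * robust_Q r gamma (fun s a => sig (P s a)) theta s a).
Proof.
move=> _ _ /andP[gamma_ge0 gamma_lt1] rho_distr crm sg_diff theta_ge0 theta_sum1 worst s a.
rewrite visitationE mulrA mulVf ?mul1r ?subr_eq0 ?gt_eqF //.
by apply: perturbed_objective_derive => // s' a'; case: (worst s' a').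
Qed.
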